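(* Let $k\ge1$ be an integer. If $k$ is even, then $A(3k,k)$ is nonsingular, i.e. $N(3k,k)=0$. If $k\equiv1\pmod4$ then $N(3k,k)=1$, and if $k\equiv3\pmod4$ then $N(3k,k)=3$.
   Context: For $n>k\ge1$, $A(n,k)$ is the $n\times n$ skew-symmetric Toeplitz matrix whose first $k$ superdiagonals have all entries $1$ and whose remaining superdiagonals have all entries $0$, and $N(n,k)$ is its nullity. *)

From mathcomp Require Import all_boot all_order all_algebra.
Set Implicit Arguments. Unset Strict Implicit. Unset Printing Implicit Defensive.
Import GRing.Theory Num.Theory.
Local Open Scope ring_scope.

Definition Amat (n k : nat) : 'M[rat]_n :=
  \matrix_(i < n, j < n)
    if ((i < j) && (j <= i + k))%N then 1
    else if ((j < i) && (i <= j + k))%N then -1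
    else 0.

Definition Nnull (n k : nat) : nat := (n - \rank (Amat n k))%N.

(* Write P t for the t-th prefix sum of a row vector u, so that u A = 0 is a
   three-term recurrence on P.  For P coming from the left kernel of A(3k, k),
   the values P 0 = 0, P 1, ..., P k, read cyclically modulo k + 1, sum to
   P (3k) over every four consecutive positions; hence they have period
   g = gcd(4, k + 1), and they determine P on the whole range.  Conversely,
   every a with a 0 = 0 and periods 4 and k + 1 yields a kernel vector with
   prefix sums a t + a (t - k) + a (t - 2k).  So (P 1, ..., P (g - 1))
   coordinatises the kernel and N(3k, k) = gcd(4, k + 1) - 1. *)

From mathcomp Require Import all_boot all_order all_algebra.
From mathcomp Require Import zify ring lra.
Set Implicit Arguments. Unset Strict Implicit. Unset Printing Implicit Defensive.
Import GRing.Theory.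
Local Open Scope ring_scope.

Lemma periodic_mul (T : Type) (a : nat -> T) p :
  (forall t, a (t + p)%N = a t) -> forall c t, a (t + c * p)%N = a t.
Proof.
by move=> a_per; elim=> [|c IHc] t; rewrite ?addn0 // mulSn addnCA addnC a_per IHc.
Qed.

Lemma four_sum_periodic (V : zmodType) (a : nat -> V) :
  (forall t, a (t + 4)%N = a t) ->
  forall t, a t + a t.+1 + a t.+2 + a t.+3 = a 0%N + a 1%N + a 2%N + a 3%N.
Proof.
move=> a_per; elim=> [|t IHt] //; rewrite -IHt -(a_per t) addn4.
by rewrite addrC !addrA.
Qed.

Lemma gcd4_succ k : gcdn 4 k.+1 = gcdn 4 (k %% 4).+1.
Proof. by rewrite -[LHS]gcdn_modr -[RHS]gcdn_modr; congr gcdn; lia. Qed.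

Lemma mxrank_kermx_eq (F : fieldType) m n d (A : 'M[F]_(m, n))
    (C : 'M[F]_(m, d)) (K : 'M[F]_(d, m)) :
  (forall u : 'rV_m, u *m A = 0 -> u *m C = 0 -> u = 0) ->
  K *m A = 0 -> K *m C = 1%:M -> \rank (kermx A) = d.
Proof.
move=> kerAC0 KA0 KC1; apply/eqP; rewrite eqn_leq; apply/andP; split.
  rewrite -(mxrank_mul_ker (kermx A) C) (_ : \rank (_ :&: _)%MS = 0)%N.
    by rewrite addn0 rank_leq_col.
  apply/eqP; rewrite mxrank_eq0; apply/eqP/row_matrixP => i; rewrite row0.
  by apply: kerAC0; apply/sub_kermxP;
    rewrite (submx_trans (row_sub i _)) ?capmxSl ?capmxSr.
have KkerA : (K <= kermx A)%MS by apply/sub_kermxP.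
by rewrite -{1}(mxrank1 F d) -KC1 (leq_trans (mxrankM_maxl _ _) (mxrankS KkerA)).
Qed.

Section PrefixSums.
Variable R : zmodType.

Definition psum n (u : 'rV[R]_n) (t : nat) : R := \sum_(i < n | (i < t)%N) u 0 i.

Lemma psum0 n (u : 'rV[R]_n) : psum u 0 = 0.
Proof. by rewrite /psum big_pred0. Qed.

Lemma psumS n (u : 'rV[R]_n) (i : 'I_n) : psum u i.+1 = psum u i + u 0 i.
Proof.
rewrite /psum (bigD1 i) //= addrC; congr (_ + _); apply: eq_bigl => j.
by rewrite ltnS andbC -val_eqE -ltn_neqAle.
Qed.

Lemma row_eq0_psum n (u : 'rV[R]_n) :
  (forall t, (t <= n)%N -> psum u t = 0) -> u = 0.
Proof.
move=> u0; apply/rowP => i; rewrite mxE.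
by have := psumS u i; rewrite !u0 ?(ltnW (ltn_ord i)) // add0r => <-.
Qed.

Definition diff_row n (P : nat -> R) : 'rV[R]_n := \row_(i < n) (P i.+1 - P i).

Lemma psum_diff_row n (P : nat -> R) t :
  (t <= n)%N -> psum (diff_row n P) t = P t - P 0%N.
Proof.
elim: t => [|t IHt] tn; first by rewrite psum0 subrr.
by rewrite (psumS _ (Ordinal tn)) IHt 1?ltnW // mxE addrC addrA subrK.
Qed.
End PrefixSums.

Definition psum_mx (R : pzRingType) n d : 'M[R]_(n, d) :=
  \matrix_(i, l) (i <= l)%N%:R.

Lemma mulmx_psum_mx (R : pzRingType) n d (u : 'rV[R]_n) (l : 'I_d) :
  (u *m psum_mx R n d) 0 l = psum u l.+1.
Proof.
rewrite mxE /psum (big_mkcond (fun i : 'I_n => (i < _)%N)).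
by apply: eq_bigr => i _; rewrite mxE ltnS; case: leqP; rewrite ?mulr1 ?mulr0.
Qed.

(* The truncated [j - k] and the [minn n] cap are the two ends of the band of
   column j clipped by the borders of the matrix. *)
Definition Amat_eqn n k (P : nat -> rat) : Prop :=
  forall j, (j < n)%N -> P j + P j.+1 = P (j - k)%N + P (minn n (j + k.+1)).

Lemma mulmx_Amat n k (u : 'rV[rat]_n) (j : 'I_n) :
  (u *m Amat n k) 0 j =
  psum u j + psum u j.+1 - psum u (j - k)%N - psum u (minn n (j + k.+1)).
Proof.
rewrite mxE /psum !(big_mkcond (fun i : 'I_n => (i < _)%N)).
rewrite -big_split -!sumrB /=; apply: eq_bigr => i _.
have := ltn_ord i; have := ltn_ord j.
by rewrite !mxE; do ![case: ifP => ?] => ? ?; first [ring | lia].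
Qed.

Lemma Amat_kerP n k (u : 'rV[rat]_n) :
  u *m Amat n k = 0 <-> Amat_eqn n k (psum u).
Proof.
split=> [uA0 j jn | eqn_u].
  by have := mulmx_Amat k u (Ordinal jn); rewrite uA0 mxE /= => ?; lra.
by apply/rowP => j; have := eqn_u j (ltn_ord j); rewrite mulmx_Amat mxE => ?; lra.
Qed.

Lemma diff_row_ker n k (P : nat -> rat) :
  P 0%N = 0 -> Amat_eqn n k P -> diff_row n P *m Amat n k = 0.
Proof.
move=> P0 eqnP; apply/Amat_kerP => j jn.
rewrite !psum_diff_row; try lia.
by rewrite P0 !subr0; apply: eqnP.
Qed.

Lemma Amat_eqn_at n k P j a b c d : Amat_eqn n k P -> (j < n)%N ->
  a = j -> b = j.+1 -> c = (j - k)%N -> d = minn n (j + k.+1) ->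
  P a + P b = P c + P d.
Proof. by move=> eqnP /eqnP + -> -> -> ->. Qed.

Lemma Amat_eqn_eq0 n k P : (0 < k)%N -> Amat_eqn n k P ->
  (forall t, (t <= k)%N -> P t = 0) -> forall t, (t <= n)%N -> P t = 0.
Proof.
move=> k_gt0 eqnP P0; elim/ltn_ind=> t IHt tn.
have [tk|kt] := leqP t k; first exact: P0.
have eqn_t : P (t - k.+1)%N + P (t - k)%N = P (t - k.+1 - k)%N + P t.
  by apply: (Amat_eqn_at (j := (t - k.+1)%N) eqnP); lia.
have [z1 z2 z3] : [/\ P (t - k.+1)%N = 0, P (t - k)%N = 0 & P (t - k.+1 - k)%N = 0].
  by split; apply: IHt; lia.
lra.
Qed.

Section ThreeBlocks.
Variables (k : nat) (P : nat -> rat).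
Hypotheses (P0 : P 0%N = 0) (eqnP : Amat_eqn (3 * k) k P).

Local Notation P3k := (P (3 * k)%N).
Local Notation eqn_at j := (Amat_eqn_at (j := j) eqnP).

Lemma window_sum t : (t + 3 <= k)%N -> P t + P t.+1 + P t.+2 + P t.+3 = P3k.
Proof.
move=> tk.
have e1 : P t + P t.+1 = P 0%N + P (t + k.+1)%N by apply: (eqn_at t); lia.
have e2 : P t.+1 + P t.+2 = P 0%N + P (t + k.+2)%N by apply: (eqn_at t.+1); lia.
have e3 : P t.+2 + P t.+3 = P 0%N + P (t + k.+3)%N by apply: (eqn_at t.+2); lia.
have e4 : P (t + k.+1)%N + P (t + k.+2)%N = P t.+1 + P (t + k.*2.+2)%N.
  by apply: (eqn_at (t + k.+1)%N); lia.
have e5 : P (t + k.+2)%N + P (t + k.+3)%N = P t.+2 + P (t + k.*2.+3)%N.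
  by apply: (eqn_at (t + k.+2)%N); lia.
have e6 : P (t + k.*2.+2)%N + P (t + k.*2.+3)%N = P (t + k.+2)%N + P3k.
  by apply: (eqn_at (t + k.*2.+2)%N); lia.
rewrite P0 in e1 e2 e3; lra.
Qed.

(* The windows of [window_sum] that wrap around [0, k] read modulo k + 1,
   with the vanishing term P 0 dropped. *)
Lemma window_sum_wrap : (2 <= k)%N ->
  [/\ P (k - 2)%N + P (k - 1)%N + P k = P3k,
      P (k - 1)%N + P k + P 1%N = P3k &
      P k + P 1%N + P 2%N = P3k].
Proof.
move=> k2.
have l0 : P 0%N + P 1%N = P 0%N + P k.+1 by apply: (eqn_at 0); lia.
have l1 : P 1%N + P 2%N = P 0%N + P k.+2 by apply: (eqn_at 1); lia.
have l2 : P (k - 2)%N + P (k - 1)%N = P 0%N + P (k.*2 - 1)%N.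
  by apply: (eqn_at (k - 2)%N); lia.
have l3 : P (k - 1)%N + P k = P 0%N + P k.*2 by apply: (eqn_at (k - 1)%N); lia.
have m0 : P k + P k.+1 = P 0%N + P k.*2.+1 by apply: (eqn_at k); lia.
have m1 : P k.+1 + P k.+2 = P 1%N + P k.*2.+2 by apply: (eqn_at k.+1); lia.
have m2 : P (k.*2 - 1)%N + P k.*2 = P (k - 1)%N + P3k.
  by apply: (eqn_at (k.*2 - 1)%N); lia.
have h0 : P k.*2 + P k.*2.+1 = P k + P3k by apply: (eqn_at k.*2); lia.
have h1 : P k.*2.+1 + P k.*2.+2 = P k.+1 + P3k by apply: (eqn_at k.*2.+1); lia.
by rewrite P0 in l0 l1 l2 l3 m0; split; lra.
Qed.

Lemma period4 t : (t + 4 <= k)%N -> P (t + 4)%N = P t.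
Proof.
move=> tk; have := window_sum (t := t) ltac:(lia).
by have := window_sum (t := t.+1) ltac:(lia); rewrite addn4; lra.
Qed.

Lemma first_block_mod4 t : (t <= k)%N -> P t = P (t %% 4).
Proof.
elim/ltn_ind: t => t IHt tk; have [t_lt4|t_ge4] := ltnP t 4.
  by rewrite modn_small.
by rewrite -(subnK t_ge4) modnDr period4 ?subnK // IHt //; lia.
Qed.

Lemma first_block_mod4E t r :
  (t <= k)%N -> (r < 4)%N -> t = r %[mod 4] -> P t = P r.
Proof. by move=> tk r4 tr; rewrite first_block_mod4 // tr modn_small. Qed.

Lemma first_block_eq0 : (0 < k)%N ->
  (forall r, (0 < r < gcdn 4 k.+1)%N -> P r = 0) ->
  forall t, (t <= k)%N -> P t = 0.
Proof.
move=> k_gt0 Pr t tk; rewrite first_block_mod4 //.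
have rk : (t %% 4 <= k)%N by lia.
have : (t %% 4 < 4)%N by lia.
move: (t %% 4)%N rk => r rk r4 {t tk}.
have [k1|k2] := leqP k 1.
  have k_eq1 : k = 1%N by lia.
  by case: r rk r4 => [|[|r]] rk _; [exact: P0 | apply: Pr; rewrite k_eq1 | lia].
have [W1 W2 W3] := window_sum_wrap k2.
have W0 : (3 <= k)%N -> P 1%N + P 2%N + P 3%N = P3k.
  by move=> k3; rewrite -(window_sum (t := 0)) // P0 add0r.
rewrite gcd4_succ in Pr.
have : (k %% 4 < 4)%N by lia.
case Ek: (k %% 4)%N Pr => [|[|[|[|]]]] // Pr _.
- have [A B C] : [/\ P (k - 2)%N = P 2%N, P (k - 1)%N = P 3%N & P k = P 0%N].
    by split; apply: first_block_mod4E; lia.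
  rewrite A B C P0 in W1 W2 W3; have W0k := W0 ltac:(lia).
  by case: r rk r4 => [|[|[|[|r]]]] _ r4; [exact: P0 | lra | lra | lra | lia].
- have [A B C] : [/\ P (k - 2)%N = P 3%N, P (k - 1)%N = P 0%N & P k = P 1%N].
    by split; apply: first_block_mod4E; lia.
  rewrite A B C P0 (Pr 1%N) // in W1 W2 W3.
  by case: r rk r4 => [|[|[|[|r]]]] _ r4; [exact: P0 | exact: Pr | lra | lra | lia].
- have [A B C] : [/\ P (k - 2)%N = P 0%N, P (k - 1)%N = P 1%N & P k = P 2%N].
    by split; apply: first_block_mod4E; lia.
  rewrite A B C P0 in W1 W2 W3.
  case: r rk r4 => [|[|[|[|r]]]] rk r4; [exact: P0 | lra | lra | | lia].
  by have := W0 rk; lra.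
- by case: r rk r4 => [|[|[|[|r]]]] _ r4; [exact: P0 | exact: Pr.. | lia].
Qed.
End ThreeBlocks.

Section BlockSums.
Variables (k : nat) (a : nat -> rat).
Hypothesis a0 : a 0%N = 0.

(* With a 0 = 0, truncated subtraction makes the terms that fall below 0
   vanish, so on the j-th block of length k this is a t + ... + a (t - j k). *)
Definition block_sum t := a t + a (t - k)%N + a (t - k.*2)%N.

Lemma block_sum_small t : (t <= k)%N -> block_sum t = a t.
Proof.
move=> tk; rewrite /block_sum.
have [-> ->] : (t - k = 0)%N /\ (t - k.*2 = 0)%N by lia.
by rewrite a0 !addr0.
Qed.

Lemma block_sum_sub t :
  (t <= 3 * k)%N -> block_sum t = a t + block_sum (t - k)%N.
Proof.
move=> tk; rewrite /block_sum.
have [-> ->] : (t - k - k = t - k.*2)%N /\ (t - k - k.*2 = 0)%N by lia.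
by rewrite a0 addr0 !addrA.
Qed.

Hypotheses (a_per4 : forall t, a (t + 4)%N = a t)
           (a_perk : forall t, a (t + k.+1)%N = a t).

Lemma periodic_eq x y c d : (x + c * 4 = y + d * k.+1)%N -> a x = a y.
Proof. by move=> xy; rewrite -(periodic_mul a_per4 c) xy periodic_mul. Qed.

Lemma block_sum_top t :
  (k.*2 <= t)%N -> block_sum t = a 0%N + a 1%N + a 2%N + a 3%N - a t.+3.
Proof.
move=> kt; rewrite -(four_sum_periodic a_per4 t) addrK /block_sum.
rewrite -(@periodic_eq t.+1 (t - k) 0 1) -?(@periodic_eq t.+2 (t - k.*2) 0 2) //.
all: lia.
Qed.

Lemma block_sum_eqn : Amat_eqn (3 * k) k block_sum.
Proof.
move=> j jk; rewrite (block_sum_sub (ltnW jk)) addrAC [RHS]addrC; congr (_ + _).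
have [j2k|kj] := ltnP j k.*2.
  rewrite (_ : minn _ _ = j.+1 + k)%N; last by lia.
  by rewrite [in RHS]block_sum_sub ?addnK ?addSnnS ?a_perk //; lia.
rewrite (_ : minn _ _ = 3 * k)%N; last by lia.
rewrite !block_sum_top; [|lia..].
rewrite -(a_per4 j) addn4 (@periodic_eq (3 * k).+3 0 0 3) ?a0; last by lia.
by rewrite subr0 addrC subrK.
Qed.
End BlockSums.

Definition mod_indicator p r t : rat := ((t %% p)%N == r.+1)%:R.

Lemma mod_indicator_periodic p r q :
  (p %| q)%N -> forall t, mod_indicator p r (t + q) = mod_indicator p r t.
Proof. by move=> /eqP pq t; rewrite /mod_indicator -modnDmr pq addn0. Qed.

Definition ker_basis k : 'M[rat]_((gcdn 4 k.+1).-1, 3 * k) :=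
  \matrix_(r < (gcdn 4 k.+1).-1)
    diff_row (3 * k) (block_sum k (mod_indicator (gcdn 4 k.+1) r)).

Lemma ker_basis_mul k : ker_basis k *m Amat (3 * k) k = 0.
Proof.
apply/row_matrixP => r; rewrite row_mul rowK row0.
have ind0 : mod_indicator (gcdn 4 k.+1) r 0 = 0 by rewrite /mod_indicator mod0n.
apply: diff_row_ker; first by rewrite block_sum_small.
apply: block_sum_eqn => //; apply: mod_indicator_periodic.
  exact: dvdn_gcdl.
exact: dvdn_gcdr.
Qed.

Lemma ker_basis_psum k :
  (0 < k)%N -> ker_basis k *m psum_mx rat (3 * k) _ = 1%:M.
Proof.
move=> k_gt0; apply/row_matrixP => r; apply/rowP => l.
rewrite row_mul rowK mulmx_psum_mx !mxE.
have p_le : (gcdn 4 k.+1 <= k.+1)%N by rewrite dvdn_leq ?dvdn_gcdr.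
have lp := ltn_ord l; have rp := ltn_ord r.
rewrite psum_diff_row ?block_sum_small /mod_indicator ?mod0n ?subr0 //; try lia.
by rewrite modn_small ?eqSS 1?eq_sym //; lia.
Qed.

Lemma mxrank_ker_Amat3 k : (0 < k)%N ->
  \rank (kermx (Amat (3 * k) k)) = (gcdn 4 k.+1).-1.
Proof.
move=> k_gt0; apply: mxrank_kermx_eq (ker_basis_mul k) (ker_basis_psum k_gt0).
move=> u /Amat_kerP uA uC; apply/row_eq0_psum/(Amat_eqn_eq0 k_gt0 uA).
apply: (first_block_eq0 (psum0 u) uA k_gt0) => r /andP[r_gt0 rp].
have rp' : (r.-1 < (gcdn 4 k.+1).-1)%N by lia.
by have := mulmx_psum_mx u (Ordinal rp'); rewrite uC mxE prednK.
Qed.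

Theorem theorem8p9 (k : nat) (hk : (1 <= k)%N) :
  (~~ odd k -> Nnull (3 * k) k = 0%N) /\
  (k %% 4 = 1 -> Nnull (3 * k) k = 1%N)%N /\
  (k %% 4 = 3 -> Nnull (3 * k) k = 3%N)%N.
Proof.
rewrite /Nnull -mxrank_ker mxrank_ker_Amat3 // gcd4_succ.
split; last by split=> ->.
by move=> k_even; have [-> | ->] : (k %% 4 = 0 \/ k %% 4 = 2)%N by lia.
Qed.
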